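(* Consider instances with indivisible items. There is no (possibly randomized) mechanism $M$ that is individually rational, truthful in expectation and budget feasible in expectation, together with constants $\alpha>1-1/e$ and $\theta_0>0$, such that on every instance with $c_{\max}/B\le\theta_0$ the expected utility of $M$ is at least $\alpha U^\star$. That is, no such mechanism achieves a (large-market) approximation ratio better than $1-1/e$.
   Context: A buyer with budget $B>0$ faces a finite set $S$ of sellers; seller $i$ owns one indivisible item giving the buyer utility $u_i>0$ and has a private cost $c_i\ge0$; $c_{\max}=\max_i c_i$. $U^\star=\max\{\sum_{i\in T}u_i: T\subseteq S,\ \sum_{i\in T}c_i\le B\}$. A randomized mechanism maps the reported cost vector to a random set of winners $W\subseteq S$ and random payments $p_i\ge0$. It is truthful in expectation if for every seller $i$, every true cost $c_i$, every report $\bar c_i$ and every reports $c_{-i}$ of the others, $\mathbb E[p_i-c_i\mathbf 1[i\in W]]$ under report $(\bar c_i,c_{-i})$ is at most its value under $(c_i,c_{-i})$; individually rational in expectation if $\mathbb E[p_i]\ge c_i\Pr[i\in W]$ under truthful reports; budget feasible in expectation if $\mathbb E[\sum_i p_i]\le B$. Its utility is $\sum_{i\in W}u_i$. *)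

From HB Require Import structures.
From mathcomp Require Import all_boot all_order all_algebra.
From mathcomp Require Import reals sequences exp.
Set Implicit Arguments. Unset Strict Implicit. Unset Printing Implicit Defensive.
Import Order.TTheory GRing.Theory Num.Theory.
Local Open Scope ring_scope.

Definition outcome (R : eqType) (n : nat) : Type := ({set 'I_n} * {ffun 'I_n -> R})%type.

(* A randomized outcome: finitely supported distribution over outcomes,
   given as a list of (probability, outcome). *)
Definition lottery (R : eqType) (n : nat) : Type := seq (R * outcome R n).

(* A (randomized) mechanism: given the public instance data
   (number of sellers n, budget B, utilities u) and the reported cost
   vector, returns a random outcome. *)
Definition mechanism (R : eqType) : Type :=
  forall n : nat, R -> ('I_n -> R) -> ('I_n -> R) -> lottery R n.

Section Defs.
Variable R : realType.

Definition valid_lottery (n : nat) (L : lottery R n) : Prop :=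
  (forall o, o \in L -> 0 <= o.1) /\ \sum_(o <- L) o.1 = 1 /\
  (forall o, o \in L -> forall i, 0 <= o.2.2 i).

Definition Exp (n : nat) (L : lottery R n) (f : outcome R n -> R) : R :=
  \sum_(o <- L) o.1 * f o.2.

Definition ind (b : bool) : R := if b then 1 else 0.

Definition upd (n : nat) (c : 'I_n -> R) (i : 'I_n) (x : R) : 'I_n -> R :=
  fun j => if j == i then x else c j.

Definition nonneg_vec (n : nat) (c : 'I_n -> R) : Prop := forall i, 0 <= c i.
Definition pos_vec (n : nat) (u : 'I_n -> R) : Prop := forall i, 0 < u i.

Definition seller_util (n : nat) (L : lottery R n) (i : 'I_n) (ci : R) : R :=
  Exp L (fun o => o.2 i - ci * ind (i \in o.1)).

Definition is_randomized_mech (M : mechanism R) : Prop :=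
  forall n B u c, 0 < B -> pos_vec u -> nonneg_vec c -> valid_lottery (M n B u c).

Definition truthful_in_expectation (M : mechanism R) : Prop :=
  forall n B u (c : 'I_n -> R) (i : 'I_n) (cbar : R),
    0 < B -> pos_vec u -> nonneg_vec c -> 0 <= cbar ->
    seller_util (M n B u (upd c i cbar)) i (c i) <= seller_util (M n B u c) i (c i).

Definition individually_rational_in_expectation (M : mechanism R) : Prop :=
  forall n B u (c : 'I_n -> R) (i : 'I_n),
    0 < B -> pos_vec u -> nonneg_vec c ->
    c i * Exp (M n B u c) (fun o => ind (i \in o.1)) <= Exp (M n B u c) (fun o => o.2 i).

Definition budget_feasible_in_expectation (M : mechanism R) : Prop :=
  forall n B u (c : 'I_n -> R),
    0 < B -> pos_vec u -> nonneg_vec c ->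
    Exp (M n B u c) (fun o => \sum_i o.2 i) <= B.

Definition exp_utility (M : mechanism R) n B (u c : 'I_n -> R) : R :=
  Exp (M n B u c) (fun o => \sum_(i in o.1) u i).

(* U* = max { sum_{i in T} u_i : sum_{i in T} c_i <= B }; the empty set is
   feasible and utilities are positive, so folding max from 0 is exact. *)
Definition Ustar n (B : R) (u c : 'I_n -> R) : R :=
  \big[Num.max/0]_(T : {set 'I_n} | \sum_(i in T) c i <= B) \sum_(i in T) u i.

(* c_max = max_i c_i (0 for no sellers; costs are nonnegative). *)
Definition cmax n (c : 'I_n -> R) : R := \big[Num.max/0]_i c i.

End Defs.

From HB Require Import structures.
From mathcomp Require Import all_boot all_order all_algebra.
From mathcomp Require Import reals sequences exp boolp.
From mathcomp Require Import ring lra.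
Import Order.TTheory GRing.Theory Num.Theory.
Local Open Scope ring_scope.

(* Take n sellers with unit utilities and i.i.d. costs drawn from a
   discretisation (on a grid of mesh 1/m) of the distribution on [0, 1] with
   CDF F(x) = 1 / (e (1 - (1 - 1/e) x)).  This F satisfies the revenue identity
   (1 - 1/e) x F(x) = F(x) - F(0), and a Myerson-style argument along the grid
   (truthfulness between neighbouring costs, individual rationality at the top)
   bounds each seller's expected winning probability by
   F(0) + (1 - 1/e) E[payment].  Summing over sellers and using budget
   feasibility, the mechanism's expected utility is at most
   n F(0) + (1 - 1/e) B.  For the budget B = n (E[c] + d), Chebyshev's inequality
   shows that all sellers are affordable except with probability 1/(n d^2), so
   E[U*] >= n - 1/d^2, while F(0) + (1 - 1/e) E[c] <= 1 - 1/e + 1/(m + 1).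
   Letting m and then n grow (which also drives c_max / B to 0) leaves no room
   for a ratio alpha > 1 - 1/e. *)

(* [X k] and [P k] are a seller's winning probability and expected payment when
   her cost is [t k], which has probability [q k]. *)
Lemma ladder_allocation_bound (R : realFieldType) (m : nat) (mu : R)
    (q t P X : nat -> R) :
  0 <= mu -> (forall k, 0 <= q k) ->
  (forall k, mu * ((\sum_(j < k.+1) q j) * t k) = \sum_(j < k.+1) q j - q 0%N) ->
  (forall k, (k < m)%N -> P k.+1 - t k * X k.+1 <= P k - t k * X k) ->
  t m * X m <= P m -> X 0%N <= 1 ->
  \sum_(k < m.+1) q k * X k <= q 0%N + mu * \sum_(k < m.+1) q k * P k.
Proof.
move=> mu_ge0 q_ge0 revenue truthful ir X0_le1.
pose Q k := \sum_(j < k.+1) q j.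
have {}revenue k : mu * (Q k * t k) = Q k - q 0%N := revenue k.
have QS k : Q k.+1 = Q k + q k.+1 by rewrite /Q big_ord_recr.
have Q_ge0 k : 0 <= Q k by apply: sumr_ge0.
have partial j : (j <= m)%N ->
    \sum_(k < j.+1) q k * X k - q 0%N * X 0%N + mu * (Q j * (P j - t j * X j))
  <= mu * \sum_(k < j.+1) q k * P k.
  elim: j => [_|j IH jm].
    have := congr1 ( *%R^~ (X 0%N)) (revenue 0%N).
    rewrite /Q /= !big_ord_recr !big_ord0 /= !add0r; nra.
  have step : mu * (Q j * (P j.+1 - t j * X j.+1)) <= mu * (Q j * (P j - t j * X j)).
    by apply/ler_wpM2l/ler_wpM2l/truthful.
  have := IH (ltnW jm).
  (* [revenue] at [j] and [j+1] turns the new summand plus the new slack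
     into [mu q_{j+1} P_{j+1}] plus the old slack evaluated at [X_{j+1}]. *)
  have := congr1 ( *%R^~ (X j.+1)) (revenue j.+1).
  have := congr1 ( *%R^~ (X j.+1)) (revenue j).
  rewrite /= !big_ord_recr /= QS; lra.
have := partial m (leqnn m).
have : 0 <= mu * (Q m * (P m - t m * X m)) by rewrite !mulr_ge0 // subr_ge0.
have : q 0%N * X 0%N <= q 0%N by rewrite ler_piMr.
lra.
Qed.

Section ProductExpectation.
Context {R : realFieldType} {n : nat} {I : finType} (q : I -> R).
Hypotheses (q_ge0 : forall k, 0 <= q k) (q_sum1 : \sum_k q k = 1).

Definition fupd (f : {ffun 'I_n -> I}) (i : 'I_n) (k : I) : {ffun 'I_n -> I} :=
  [ffun j => if j == i then k else f j].

Lemma fupd_eq f i k : fupd f i k i = k.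
Proof. by rewrite ffunE eqxx. Qed.

Lemma fupd_neq f i k j : j != i -> fupd f i k j = f j.
Proof. by rewrite ffunE => /negbTE ->. Qed.

Lemma fupdK f i k : fupd (fupd f i k) i (f i) = f.
Proof. by apply/ffunP=> j; rewrite !ffunE; case: eqP => // ->. Qed.

Definition pweight (f : {ffun 'I_n -> I}) : R := \prod_i q (f i).

Definition pexp (h : {ffun 'I_n -> I} -> R) : R := \sum_f pweight f * h f.

Lemma pweight_ge0 f : 0 <= pweight f.
Proof. exact: prodr_ge0. Qed.

Lemma pweight_fupd f i k : pweight (fupd f i k) * q (f i) = q k * pweight f.
Proof.
rewrite /pweight (bigD1 i) //= [in RHS](bigD1 i) //= fupd_eq.
rewrite (eq_bigr (fun j => q (f j))) => [|j /fupd_neq -> //].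
by rewrite mulrAC mulrA.
Qed.

Lemma eq_pexp {h1 h2 : {ffun 'I_n -> I} -> R} : h1 =1 h2 -> pexp h1 = pexp h2.
Proof. by move=> eq_h; apply: eq_bigr => f _; rewrite eq_h. Qed.

Lemma ler_pexp {h1 h2 : {ffun 'I_n -> I} -> R} : (forall f, h1 f <= h2 f) -> pexp h1 <= pexp h2.
Proof. by move=> le_h; apply: ler_sum => f _; rewrite ler_wpM2l ?pweight_ge0. Qed.

Lemma pexp_sum (J : finType) (h : J -> {ffun 'I_n -> I} -> R) :
  pexp (fun f => \sum_j h j f) = \sum_j pexp (h j).
Proof. by rewrite /pexp; under eq_bigr do rewrite mulr_sumr; rewrite exchange_big. Qed.

Lemma pexpD h1 h2 : pexp (fun f => h1 f + h2 f) = pexp h1 + pexp h2.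
Proof. by rewrite /pexp -big_split; apply: eq_bigr => f _; rewrite mulrDr. Qed.

Lemma pexpZ c h : pexp (fun f => c * h f) = c * pexp h.
Proof. by rewrite /pexp mulr_sumr; apply: eq_bigr => f _; rewrite mulrCA. Qed.

Lemma pexpB h1 h2 : pexp (fun f => h1 f - h2 f) = pexp h1 - pexp h2.
Proof.
rewrite -mulN1r -pexpZ -pexpD; apply: eq_pexp => f.
by rewrite mulN1r.
Qed.

(* Coordinate [i] is independent of the others, so it may be redrawn afresh. *)
Lemma pexp_resample i h : pexp h = \sum_k q k * pexp (fun f => h (fupd f i k)).
Proof.
symmetry; rewrite /pexp.
under eq_bigr do rewrite mulr_sumr.
rewrite exchange_big /= pair_bigA /=.
pose swap (p : {ffun 'I_n -> I} * I) := (fupd p.1 i p.2, p.1 i).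
have swapK : involutive swap by case=> f k; rewrite /swap /= fupdK fupd_eq.
rewrite (reindex_inj (inv_inj swapK)) /=.
transitivity (\sum_(p : {ffun 'I_n -> I} * I) q p.2 * (pweight p.1 * h p.1)).
  apply: eq_bigr => -[f k] _ /=.
  by rewrite fupdK mulrA [q (f i) * _]mulrC pweight_fupd mulrA.
rewrite -(pair_bigA _ (fun f k => q k * (pweight f * h f))) /=.
by apply: eq_bigr => f _; rewrite -mulr_suml q_sum1 mul1r.
Qed.

Lemma pexp_cst c : pexp (fun=> c) = c.
Proof.
rewrite /pexp -mulr_suml /pweight -(bigA_distr_bigA (fun=> q)) /=.
by rewrite (eq_bigr (fun=> 1)) ?prodr_const ?expr1n ?mul1r.
Qed.

Lemma pexp_coord i (g : I -> R) : pexp (fun f => g (f i)) = \sum_k q k * g k.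
Proof.
rewrite (pexp_resample i); apply: eq_bigr => k _.
by rewrite (@eq_pexp _ (fun=> g k)) ?pexp_cst // => f; rewrite fupd_eq.
Qed.

Variable (c : I -> R).
Hypothesis c01 : forall k, 0 <= c k <= 1.

Definition mean : R := \sum_k q k * c k.

Lemma mean01 : 0 <= mean <= 1.
Proof.
rewrite sumr_ge0 => [|k _]; last by rewrite mulr_ge0 //; case/andP: (c01 k).
rewrite -q_sum1 ler_sum // => k _.
by rewrite ler_piMr //; case/andP: (c01 k).
Qed.

Let dev i (f : {ffun 'I_n -> I}) := c (f i) - mean.

Lemma pexp_dev i : pexp (dev i) = 0.
Proof. by rewrite pexpB pexp_cst (pexp_coord i c) subrr. Qed.

Lemma pexp_dev_pair i j : i != j -> pexp (fun f => dev i f * dev j f) = 0.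
Proof.
move=> neq_ij; rewrite (pexp_resample i) big1 // => k _.
rewrite (@eq_pexp _ (fun f => (c k - mean) * dev j f)) ?pexpZ ?pexp_dev ?mulr0 //.
by move=> f; rewrite /dev fupd_eq fupd_neq // eq_sym.
Qed.

Lemma pexp_sum_dev_sq : pexp (fun f => (\sum_i c (f i) - n%:R * mean) ^+ 2) <= n%:R.
Proof.
have sq_sum (f : {ffun 'I_n -> I}) :
    (\sum_i c (f i) - n%:R * mean) ^+ 2 = \sum_i \sum_j dev i f * dev j f.
  have -> : \sum_i c (f i) - n%:R * mean = \sum_i dev i f.
    by rewrite /dev sumrB sumr_const card_ord mulr_natl.
  by rewrite expr2 mulr_suml; apply: eq_bigr => i _; rewrite mulr_sumr.
rewrite (eq_pexp sq_sum) pexp_sum.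
have -> : n%:R = \sum_(i < n) (1 : R) by rewrite sumr_const card_ord.
apply: ler_sum => i _.
rewrite pexp_sum (bigD1 i) //= big1 => [|j ji]; last by apply: pexp_dev_pair; rewrite eq_sym.
rewrite addr0 -(pexp_cst 1) ler_pexp // => f.
by have := c01 (f i); have := mean01; rewrite /dev => /andP[? ?] /andP[? ?]; nra.
Qed.
End ProductExpectation.

Lemma expRN_invn_le (R : realType) (m : nat) :
  (0 < m)%N -> expR (- m%:R^-1) <= 1 - (m.+1)%:R^-1 :> R.
Proof.
move=> m_gt0; have m_pos : 0 < m%:R :> R by rewrite ltr0n.
rewrite expRN (_ : 1 - _ = (1 + m%:R^-1)^-1); last first.
  by rewrite -natr1; field; apply/andP; split; apply: lt0r_neq0; lra.
by rewrite lef_pV2 ?posrE ?expR_gt0 ?expR_ge1Dx // ltr_wpDr ?invr_ge0 ?ler0n.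
Qed.

Section Grid.
Variables (R : realType) (m : nat).
Hypothesis m_gt0 : (0 < m)%N.

Definition mu : R := 1 - expR (-1).
Definition grid_cdf (k : nat) : R := expR (k%:R / m%:R - 1).
Definition grid_prob (k : nat) : R :=
  if k is k'.+1 then grid_cdf k'.+1 - grid_cdf k' else grid_cdf 0.
Definition grid_cost (k : nat) : R := (1 - expR (- (k%:R / m%:R))) / mu.

Lemma mu_gt0 : 0 < mu.
Proof. by rewrite subr_gt0 expR_lt1 ltrN10. Qed.

Lemma mu_le1 : mu <= 1.
Proof. by rewrite gerBl expR_ge0. Qed.

Lemma grid_cdf0 : grid_cdf 0 = expR (-1).
Proof. by rewrite /grid_cdf mul0r add0r. Qed.

Lemma grid_prob_ge0 k : 0 <= grid_prob k.
Proof.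
case: k => [|k]; first exact: expR_ge0.
by rewrite subr_ge0 ler_expR lerD2r ler_pM2r ?invr_gt0 ?ltr0n // ler_nat.
Qed.

Lemma sum_grid_prob j : \sum_(k < j.+1) grid_prob k = grid_cdf j.
Proof.
elim: j => [|j IH]; first by rewrite big_ord1.
by rewrite big_ord_recr IH /= addrC subrK.
Qed.

Lemma sum_grid_prob1 : \sum_(k < m.+1) grid_prob k = 1.
Proof. by rewrite sum_grid_prob /grid_cdf divff ?subrr ?expR0 // pnatr_eq0 -lt0n. Qed.

Lemma grid_cost01 k : (k <= m)%N -> 0 <= grid_cost k <= 1.
Proof.
move=> km; have km1 : k%:R / m%:R <= 1 :> R by rewrite ler_pdivrMr ?ltr0n // mul1r ler_nat.
rewrite divr_ge0 ?(ltW mu_gt0) ?subr_ge0 ?expR_le1 ?oppr_le0 ?divr_ge0 //=.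
by rewrite ler_pdivrMr ?mu_gt0 // mul1r lerB // ler_expR lerN2.
Qed.

Lemma mu_grid_cost k : mu * grid_cost k = 1 - expR (- (k%:R / m%:R)).
Proof. by rewrite mulrC divfK // lt0r_neq0 // mu_gt0. Qed.

Lemma grid_revenue k : mu * (grid_cdf k * grid_cost k) = grid_cdf k - grid_cdf 0.
Proof.
rewrite mulrCA mu_grid_cost mulrBr mulr1 grid_cdf0 /grid_cdf -expRD.
by congr (_ - expR _); ring.
Qed.

Lemma grid_prob_cost k :
  mu * (grid_prob k.+1 * grid_cost k.+1) =
  grid_prob k.+1 - expR (-1) * (1 - expR (- m%:R^-1)).
Proof.
have cdfS : grid_cdf k.+1 * expR (- (k.+1%:R / m%:R)) = expR (-1).
  by rewrite /grid_cdf -expRD; congr expR; ring.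
have cdf : grid_cdf k * expR (- (k.+1%:R / m%:R)) = expR (-1) * expR (- m%:R^-1).
  by rewrite /grid_cdf -!expRD -natr1; congr expR; ring.
rewrite mulrCA mu_grid_cost [grid_prob _]/=; lra.
Qed.

(* Summing [grid_prob_cost] telescopes to [1 - m e^-1 (1 - e^(-1/m))]. *)
Lemma grid_mean_cost_bound :
  grid_prob 0 + mu * \sum_(k < m.+1) grid_prob k * grid_cost k <= mu + (m.+1)%:R^-1.
Proof.
have revenue0 := grid_revenue 0; rewrite subrr in revenue0.
rewrite big_ord_recl mulrDr [grid_prob _]/= revenue0 add0r mulr_sumr.
under eq_bigr do rewrite lift0 grid_prob_cost.
have sum_tail : \sum_(i < m) grid_prob (lift ord0 i) = 1 - grid_prob 0.
  by rewrite -sum_grid_prob1 big_ord_recl addrC addKr.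
rewrite sumrB sum_tail sumr_const card_ord /= grid_cdf0 /mu.
have e01 : 0 < expR (-1 : R) < 1 by rewrite expR_gt0 expR_lt1 ltrN10.
have key (e E b : R) : 0 < e < 1 -> 0 <= b -> m%:R * b = 1 - b -> E <= 1 - b ->
    e + (1 - e - (e * (1 - E)) *+ m) <= 1 - e + b.
  move=> /andP[e0 e1] b0 mb E_le; rewrite -mulr_natr.
  have h1 : e * m%:R * b <= e * m%:R * (1 - E).
    by apply: ler_wpM2l; [rewrite mulr_ge0 ?ler0n ?(ltW e0) | lra].
  have h2 : e * b <= b by rewrite ler_piMl // ltW.
  move: h1; rewrite -mulrA mb; lra.
apply: key => //; last exact: expRN_invn_le.
  by rewrite invr_ge0.
by rewrite -natr1; field; rewrite natr1 pnatr_eq0.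
Qed.

End Grid.

Section Lottery.
Context {R : realType} {n : nat}.
Implicit Types (L : lottery R n) (f g : outcome R n -> R).

Lemma Exp_subZ L f g a : Exp L (fun o => f o - a * g o) = Exp L f - a * Exp L g.
Proof. by rewrite /Exp mulr_sumr -sumrB; apply: eq_bigr => o _; rewrite mulrBr mulrCA. Qed.

Lemma Exp_sum L (F : 'I_n -> outcome R n -> R) :
  Exp L (fun o => \sum_i F i o) = \sum_i Exp L (F i).
Proof. by rewrite /Exp; under eq_bigr do rewrite mulr_sumr; rewrite exchange_big. Qed.

Lemma ler_Exp L f g : valid_lottery L -> (forall o, f o <= g o) -> Exp L f <= Exp L g.
Proof.
case=> [p_ge0 _] le_fg; rewrite /Exp !big_seq ler_sum // => o oL.
by rewrite ler_wpM2l ?p_ge0.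
Qed.

Lemma Exp_cst L a : valid_lottery L -> Exp L (fun=> a) = a.
Proof. by case=> [_ [p_sum1 _]]; rewrite /Exp -mulr_suml p_sum1 mul1r. Qed.

End Lottery.

Definition unit_util (R : realType) (n : nat) : 'I_n -> R := fun=> 1.

Lemma unit_util_pos (R : realType) (n : nat) : pos_vec (unit_util R n).
Proof. by move=> i; apply: ltr01. Qed.

Lemma Ustar_ge0 {R : realType} {n : nat} (B : R) (u c : 'I_n -> R) :
  0 <= B -> 0 <= Ustar B u c.
Proof. by move=> B_ge0; rewrite /Ustar (bigD1 set0) /= ?big_set0 // le_max lexx. Qed.

Lemma Ustar_unit_ge {R : realType} {n : nat} (B : R) (c : 'I_n -> R) :
  \sum_i c i <= B -> n%:R <= Ustar B (unit_util R n) c.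
Proof.
have sum_setT (F : 'I_n -> R) : \sum_(i in [set: 'I_n]) F i = \sum_i F i.
  by apply: eq_bigl => i; rewrite in_setT.
move=> le_cB; rewrite /Ustar (bigD1 setT) /= sum_setT ?le_max //.
by rewrite sumr_const card_ord lexx.
Qed.

(* Chebyshev's inequality pointwise: when the sellers are not all affordable,
   the deviation term alone exceeds [n]. *)
Lemma Ustar_unit_ge_dev {R : realType} {n : nat} (c : 'I_n -> R) (a d : R) :
  (0 < n)%N -> 0 <= a -> 0 < d ->
  n%:R - (n%:R * d ^+ 2)^-1 * (\sum_i c i - n%:R * a) ^+ 2
    <= Ustar (n%:R * (a + d)) (unit_util R n) c.
Proof.
move=> n_gt0 a_ge0 d_gt0; have n_pos : 0 < n%:R :> R by rewrite ltr0n.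
have w_ge0 : 0 <= (n%:R * d ^+ 2)^-1 by rewrite invr_ge0 mulr_ge0 ?ler0n ?sqr_ge0.
have dev_ge0 : 0 <= (n%:R * d ^+ 2)^-1 * (\sum_i c i - n%:R * a) ^+ 2.
  by rewrite mulr_ge0 ?sqr_ge0.
have U_ge0 : 0 <= Ustar (n%:R * (a + d)) (unit_util R n) c.
  by apply: Ustar_ge0; rewrite mulr_ge0 ?ler0n // addr_ge0 // ltW.
case: (lerP (\sum_i c i) (n%:R * (a + d))) => [/Ustar_unit_ge | gt_B]; first lra.
have nd_le : n%:R * d <= \sum_i c i - n%:R * a by lra.
have sq_le : (n%:R * d) ^+ 2 <= (\sum_i c i - n%:R * a) ^+ 2.
  by rewrite !expr2 ler_pM // mulr_ge0 ?ler0n ?ltW.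
have weight_nd : (n%:R * d ^+ 2)^-1 * (n%:R * d) ^+ 2 = n%:R.
  by field; rewrite !lt0r_neq0.
have := ler_wpM2l w_ge0 sq_le; rewrite weight_nd; lra.
Qed.

Lemma cmax_le {R : realType} {n : nat} (c : 'I_n -> R) (x : R) :
  0 <= x -> (forall i, c i <= x) -> cmax c <= x.
Proof.
by move=> x_ge0 le_cx; apply: (big_ind (fun y => y <= x)) => // y z; rewrite ge_max => ->.
Qed.

Lemma cmax_div_le {R : realType} {n : nat} {c : 'I_n -> R} {B th : R} :
  (forall i, c i <= 1) -> 0 < th -> th^-1 <= B -> cmax c / B <= th.
Proof.
move=> c_le1 th_gt0 th_le; have B_gt0 : 0 < B by rewrite (lt_le_trans _ th_le) ?invr_gt0.
rewrite ler_pdivrMr // (le_trans (cmax_le c 1 ler01 c_le1)) //.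
by have := ler_wpM2l (ltW th_gt0) th_le; rewrite mulfV ?lt0r_neq0.
Qed.

Section Mechanism.
Context {R : realType} (M : mechanism R).
Hypotheses (M_random : is_randomized_mech M)
  (M_ir : individually_rational_in_expectation M)
  (M_truthful : truthful_in_expectation M)
  (M_budget : budget_feasible_in_expectation M).
Context {n : nat} (B : R).
Hypothesis B_gt0 : 0 < B.

Let u := unit_util R n.
Let u_pos : pos_vec u := unit_util_pos R n.

Definition alloc (c : 'I_n -> R) i := Exp (M n B u c) (fun o => ind R (i \in o.1)).
Definition pay (c : 'I_n -> R) i := Exp (M n B u c) (fun o => o.2 i).

Lemma alloc_le1 c i : nonneg_vec c -> alloc c i <= 1.
Proof.
move=> c_ge0; have valid := M_random _ _ _ _ B_gt0 u_pos c_ge0.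
rewrite -(Exp_cst _ 1 valid) ler_Exp // => o.
by rewrite /ind; case: (_ \in _); rewrite ?ler01.
Qed.

Lemma pay_truthful c i cbar : nonneg_vec c -> 0 <= cbar ->
  pay (upd c i cbar) i - c i * alloc (upd c i cbar) i <= pay c i - c i * alloc c i.
Proof.
move=> c_ge0 cbar_ge0.
by have := M_truthful _ _ _ _ i _ B_gt0 u_pos c_ge0 cbar_ge0; rewrite /seller_util !Exp_subZ.
Qed.

Lemma alloc_le_pay c i : nonneg_vec c -> c i * alloc c i <= pay c i.
Proof. by move=> c_ge0; apply: M_ir. Qed.

Lemma sum_pay_le c : nonneg_vec c -> \sum_i pay c i <= B.
Proof. by move=> c_ge0; rewrite -Exp_sum; apply: M_budget. Qed.

Lemma exp_utility_unit c : exp_utility M B u c = \sum_i alloc c i.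
Proof.
rewrite /exp_utility -Exp_sum; apply: eq_bigr => o _; congr (_ * _).
by rewrite big_mkcond; apply: eq_bigr => i _; rewrite /u /unit_util /ind; case: (_ \in _).
Qed.

End Mechanism.

Section GridMarket.
Variables (R : realType) (n m : nat).
Hypothesis m_gt0 : (0 < m)%N.

Let q (k : 'I_m.+1) : R := grid_prob R m k.
Let q_ge0 k : 0 <= q k. Proof. exact: grid_prob_ge0. Qed.
Let q_sum1 : \sum_k q k = 1. Proof. exact: sum_grid_prob1. Qed.

Definition grid_profile (f : {ffun 'I_n -> 'I_m.+1}) : 'I_n -> R :=
  fun i => grid_cost R m (f i).

Definition grid_mean : R := mean q (fun k => grid_cost R m k).

Let grid_cost01_ord (k : 'I_m.+1) : 0 <= grid_cost R m k <= 1.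
Proof. by apply: grid_cost01; rewrite // -ltnS. Qed.

Lemma grid_mean_ge0 : 0 <= grid_mean.
Proof. by have /andP[] := mean01 _ q_ge0 q_sum1 _ grid_cost01_ord. Qed.

Lemma grid_profile_ge0 f : nonneg_vec (grid_profile f).
Proof. by move=> i; have /andP[] := grid_cost01_ord (f i). Qed.

Lemma grid_profile_le1 f i : grid_profile f i <= 1.
Proof. by have /andP[] := grid_cost01_ord (f i). Qed.

Lemma grid_profile_fupd f i k :
  (k <= m)%N -> grid_profile (fupd f i (inord k)) i = grid_cost R m k.
Proof. by move=> km; rewrite /grid_profile fupd_eq inordK. Qed.

Lemma grid_profile_fupdS f i k : (k < m)%N ->
  grid_profile (fupd f i (inord k.+1)) =
  upd (grid_profile (fupd f i (inord k))) i (grid_cost R m k.+1).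
Proof.
move=> km; apply: funext => j; rewrite /grid_profile /upd !ffunE.
by case: eqP => // _; rewrite inordK.
Qed.

Lemma pexp_Ustar_ge (d : R) : (0 < n)%N -> 0 < d ->
  n%:R - (d ^+ 2)^-1 <=
  pexp q (fun f => Ustar (n%:R * (grid_mean + d)) (unit_util R n) (grid_profile f)).
Proof.
move=> n_gt0 d_gt0; have n_pos : 0 < n%:R :> R by rewrite ltr0n.
pose w := (n%:R * d ^+ 2)^-1.
apply: (@le_trans _ _
  (pexp q (fun f => n%:R - w * (\sum_i grid_profile f i - n%:R * grid_mean) ^+ 2))).
  rewrite pexpB pexpZ pexp_cst // lerD2l lerN2.
  have -> : (d ^+ 2)^-1 = w * n%:R by rewrite /w; field; rewrite !lt0r_neq0.
  rewrite ler_pM2l ?invr_gt0 ?mulr_gt0 ?ltr0n ?exprn_gt0 //.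
  exact: (pexp_sum_dev_sq _ q_ge0 q_sum1 _ grid_cost01_ord).
apply: ler_pexp => // f; exact: Ustar_unit_ge_dev grid_mean_ge0 d_gt0.
Qed.

Context (M : mechanism R).
Hypotheses (M_random : is_randomized_mech M)
  (M_ir : individually_rational_in_expectation M)
  (M_truthful : truthful_in_expectation M)
  (M_budget : budget_feasible_in_expectation M).
Variable (B : R).
Hypothesis B_gt0 : 0 < B.

(* Fixing the other sellers' costs, seller [i]'s cost runs along the grid,
   where [ladder_allocation_bound] applies. *)
Lemma pexp_alloc_le i :
  pexp q (fun f => alloc M B (grid_profile f) i)
    <= grid_prob R m 0 + mu R * pexp q (fun f => pay M B (grid_profile f) i).
Proof.
rewrite (pexp_resample _ q_sum1 i) [X in _ <= _ + _ * X](pexp_resample _ q_sum1 i).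
pose X k := pexp q (fun f => alloc M B (grid_profile (fupd f i (inord k))) i).
pose P k := pexp q (fun f => pay M B (grid_profile (fupd f i (inord k))) i).
have -> : \sum_k q k * pexp q (fun f => alloc M B (grid_profile (fupd f i k)) i)
    = \sum_(k < m.+1) grid_prob R m k * X k.
  by apply: eq_bigr => k _; rewrite /X inord_val.
have -> : \sum_k q k * pexp q (fun f => pay M B (grid_profile (fupd f i k)) i)
    = \sum_(k < m.+1) grid_prob R m k * P k.
  by apply: eq_bigr => k _; rewrite /P inord_val.
apply: (ladder_allocation_bound _ _ _ _ (grid_cost R m)).
- exact/ltW/mu_gt0.
- exact: grid_prob_ge0.
- by move=> k; rewrite sum_grid_prob; apply: grid_revenue.
- move=> k km; rewrite /P /X -!pexpZ -!pexpB; apply: ler_pexp => // f.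
  have cost_ge0 : 0 <= grid_cost R m k.+1 by have /andP[] := grid_cost01 R _ m_gt0 _ km.
  have := pay_truthful _ M_truthful _ B_gt0 _ i _
    (grid_profile_ge0 (fupd f i (inord k))) cost_ge0.
  by rewrite grid_profile_fupd ?(ltnW km) // -grid_profile_fupdS.
- rewrite /P /X -pexpZ; apply: ler_pexp => // f.
  by have := alloc_le_pay _ M_ir _ B_gt0 _ i
    (grid_profile_ge0 (fupd f i (inord m))); rewrite grid_profile_fupd.
- rewrite /X -[r in _ <= r](@pexp_cst _ n _ q q_sum1 1); apply: ler_pexp => // f /=.
  by have := alloc_le1 _ M_random _ B_gt0 _ i (grid_profile_ge0 (fupd f i (inord 0))).
Qed.

Lemma pexp_sum_alloc_le :
  pexp q (fun f => \sum_i alloc M B (grid_profile f) i) <= n%:R * grid_prob R m 0 + mu R * B.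
Proof.
rewrite pexp_sum (le_trans (ler_sum _ (fun i _ => pexp_alloc_le i))) //.
rewrite big_split lerD ?sumr_const ?card_ord ?mulr_natl // -mulr_sumr.
rewrite ler_wpM2l ?(ltW (mu_gt0 _)) // -pexp_sum -[r in _ <= r](@pexp_cst _ n _ q q_sum1 B).
apply: ler_pexp => // f /=.
exact: (sum_pay_le _ M_budget _ B_gt0 _ (grid_profile_ge0 f)).
Qed.

Lemma grid_market_utility_bound (al d : R) : (0 < n)%N -> 0 < d -> 0 <= al ->
  B = n%:R * (grid_mean + d) ->
  (forall f, al * Ustar B (unit_util R n) (grid_profile f)
               <= exp_utility M B (unit_util R n) (grid_profile f)) ->
  al * (n%:R - (d ^+ 2)^-1) <= n%:R * grid_prob R m 0 + mu R * B.
Proof.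
move=> n_gt0 d_gt0 al_ge0 B_def approx.
rewrite (le_trans (ler_wpM2l al_ge0 (pexp_Ustar_ge d n_gt0 d_gt0))) // -B_def -pexpZ.
rewrite (le_trans _ pexp_sum_alloc_le) //; apply: ler_pexp => // f.
by rewrite -exp_utility_unit.
Qed.

End GridMarket.

Lemma exists_natr_gt {R : realType} (x : R) : exists k : nat, x < k.+1%:R.
Proof.
have /(le_lt_trans (ler_norm x)) x_lt := archi_boundP (normr_ge0 x).
by exists (Num.Def.archi_bound `|x|); rewrite (lt_le_trans x_lt) // ler_nat.
Qed.

Lemma ratio_gap_absurd {R : realFieldType} {al mu d N q0 c b : R} :
  0 < d -> 0 <= mu <= 1 -> al = mu + 4 * d -> b < d -> al / d ^+ 3 < N ->
  q0 + mu * c <= mu + b -> al * (N - (d ^+ 2)^-1) <= N * q0 + mu * (N * (c + d)) ->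
  False.
Proof.
move=> d_gt0 /andP[mu_ge0 mu_le1] al_eq b_lt N_gt cost_le al_le.
have al_gt0 : 0 < al by rewrite al_eq ltr_wpDl // mulr_gt0.
have N_gt0 : 0 < N by rewrite (le_lt_trans _ N_gt) // divr_ge0 ?exprn_ge0 ?ltW.
have Nd_gt0 : 0 < N * d by rewrite mulr_gt0.
have alw_lt : al * (d ^+ 2)^-1 < N * d.
  by rewrite (_ : _ * _ = al / d ^+ 3 * d) ?ltr_pM2r //; field; rewrite lt0r_neq0.
have Ncost : N * (q0 + mu * c) <= N * (mu + b) by apply: ler_wpM2l => //; apply: ltW.
have Nb_le : N * b <= N * d by apply: ler_wpM2l; apply: ltW.
have muNd_le : mu * (N * d) <= N * d by apply: ler_piMl => //; apply: ltW.
have alN : al * N = mu * N + 4 * (d * N) by rewrite al_eq mulrDl mulrA.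
set w := (d ^+ 2)^-1 in alw_lt al_le; clearbody w; lra.
Qed.

Theorem theorem2 (R : realType) :
  ~ exists (M : mechanism R) (alpha theta0 : R),
      [/\ is_randomized_mech M,
          individually_rational_in_expectation M,
          truthful_in_expectation M &
          budget_feasible_in_expectation M] /\
      [/\ 1 - (expR 1)^-1 < alpha,
          0 < theta0 &
          forall (n : nat) (B : R) (u c : 'I_n -> R),
            0 < B -> pos_vec u -> nonneg_vec c ->
            cmax c / B <= theta0 ->
            alpha * Ustar B u c <= exp_utility M B u c].
Proof.
case=> M [al [th [[M_random M_ir M_truthful M_budget] [al_gt th_gt0 approx]]]].
rewrite -expRN -/(mu R) in al_gt.
pose d := (al - mu R) / 4.
have d_gt0 : 0 < d by rewrite divr_gt0 // subr_gt0.
have [k d_lt] := exists_natr_gt d^-1.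
pose m := k.+1; have m_gt0 : (0 < m)%N by [].
have m_lt : m.+1%:R^-1 < d.
  by rewrite invf_plt ?posrE ?ltr0n // (lt_trans d_lt) // ltr_nat /m ltnSn.
have [n' N_gt] := exists_natr_gt (th^-1 / d + al / d ^+ 3).
pose n := n'.+1; pose B := n%:R * (grid_mean R m + d).
have al_ge0 : 0 <= al by apply/ltW/(lt_trans (mu_gt0 R)).
have th_lt : th^-1 < n%:R * d.
  rewrite -ltr_pdivrMr //; apply: le_lt_trans N_gt.
  by rewrite lerDl divr_ge0 // exprn_ge0 // ltW.
have nd_le : n%:R * d <= B.
  by apply: ler_wpM2l; rewrite ?ler0n // lerDr grid_mean_ge0.
have th_le := le_trans (ltW th_lt) nd_le.
have B_gt0 : 0 < B by rewrite (lt_le_trans _ th_le) ?invr_gt0.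
apply: (ratio_gap_absurd (al := al) (N := n%:R) d_gt0 _ _ m_lt _ (grid_mean_cost_bound R m m_gt0)).
- by rewrite (ltW (mu_gt0 R)) mu_le1.
- by rewrite /d; field.
- by rewrite (le_lt_trans _ N_gt) // lerDr divr_ge0 ?invr_ge0 ?ltW.
apply: (grid_market_utility_bound _ _ _ m_gt0 _ M_random M_ir M_truthful M_budget _ B_gt0) => //.
move=> f; apply: approx => //; first exact: grid_profile_ge0.
exact: cmax_div_le (grid_profile_le1 _ _ _ m_gt0 f) th_gt0 th_le.
Qed.
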